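(* Let $H$ be a complex Hilbert space, $\varphi,\psi:[0,1]\to\mathbb{R}$ continuous, $A\in\mathbb{B}(H)$, $t\in[0,1]$, and put $m(t)=\min\{|\varphi(t)+\psi(t)|,|\varphi(t)-\psi(t)|\}$. Then (1) $\omega_t(\varphi,\psi;A)\ge m(t)\Big(\frac{\|A\|}{2}+\frac{\big|\|\operatorname{Re}A\|-\|\operatorname{Im}A\|\big|}{2}\Big)$; (2) $\omega_t^2(\varphi,\psi;A)\ge m(t)^2\Big(\frac14\|A^*A+AA^*\|+\frac{\big|\|\operatorname{Re}A\|^2-\|\operatorname{Im}A\|^2\big|}{2}\Big)$; (3) $\omega_t^2(\varphi,\psi;A)\ge m(t)^2\Big(\frac14\|A^*A+AA^*\|+\frac{c^2(\operatorname{Re}A)+c^2(\operatorname{Im}A)}{2}+\Big|\frac{\|\operatorname{Re}A\|^2-\|\operatorname{Im}A\|^2}{2}+\frac{c^2(\operatorname{Im}A)-c^2(\operatorname{Re}A)}{2}\Big|\Big)$; (4) $\omega_t^4(\varphi,\psi;A)\ge m(t)^4\Big(\frac1{16}\big\|(A^*A+AA^* )^2+4(\operatorname{Re}(A^2))^2\big\|+\frac12\big|\|\operatorname{Re}A\|^4-\|\operatorname{Im}A\|^4\big|\Big)$.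
   Context: $\operatorname{Re}A=(A+A^* )/2$, $\operatorname{Im}A=(A-A^* )/(2i)$, $S_1(H)$ is the unit sphere of $H$, $c(T)=\inf_{x\in S_1(H)}|\langle Tx,x\rangle|$ is the Crawford number, and $\omega_t(\varphi,\psi;A)=\sup_{x\in S_1(H)}|\langle(\varphi(t)A+\psi(t)A^* )x,x\rangle|$. *)

From HB Require Import structures.
From mathcomp Require Import all_boot all_order all_algebra.
From mathcomp Require Import all_classical all_reals all_analysis.
From mathcomp Require Import complex.
Set Implicit Arguments. Unset Strict Implicit. Unset Printing Implicit Defensive.
Import Order.TTheory GRing.Theory Num.Theory.
Local Open Scope classical_set_scope.
Local Open Scope ring_scope.

Section HilbertDefs.
Variable R : realType.
Local Notation C := R[i].

Definition cabs (z : C) : R :=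
  Num.sqrt (complex.Re z ^+ 2 + complex.Im z ^+ 2).

Variable V : lmodType C.
Variable ip : V -> V -> C.   (* inner product, linear in the first argument *)

Definition vnorm (x : V) : R := Num.sqrt (complex.Re (ip x x)).

Record is_hilbert : Prop := IsHilbert {
  ip_linear : forall (a : C) (x y z : V), ip (a *: x + y) z = a * ip x z + ip y z;
  ip_conjsym : forall x y : V, ip y x = conjc (ip x y);
  ip_pos : forall x : V, complex.Im (ip x x) = 0 /\ 0 <= complex.Re (ip x x);
  ip_definite : forall x : V, ip x x = 0 -> x = 0;
  ip_complete : forall u : nat -> V,
    (forall e : R, 0 < e -> exists N, forall m n, (N <= m)%N -> (N <= n)%N ->
        vnorm (u m - u n) < e) ->
    exists l : V, forall e : R, 0 < e -> exists N, forall n, (N <= n)%N ->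
        vnorm (u n - l) < e }.

Definition bounded_op (T : V -> V) : Prop :=
  (forall (a : C) (x y : V), T (a *: x + y) = a *: T x + T y) /\
  (exists M : R, forall x, vnorm (T x) <= M * vnorm x).

Definition is_adjoint (T Tstar : V -> V) : Prop :=
  forall x y : V, ip (T x) y = ip x (Tstar y).

Definition sphere1 : set V := [set x | vnorm x = 1].

Definition opnorm (T : V -> V) : R := sup [set vnorm (T x) | x in sphere1].

Definition crawford (T : V -> V) : R := inf [set cabs (ip (T x) x) | x in sphere1].

Definition op_add (S T : V -> V) : V -> V := fun x => S x + T x.
Definition op_comp (S T : V -> V) : V -> V := fun x => S (T x).
Definition op_scale (a : C) (T : V -> V) : V -> V := fun x => a *: T x.

Definition op_Re (A Astar : V -> V) : V -> V :=
  op_scale (2%:R)^-1 (op_add A Astar).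
Definition op_Im (A Astar : V -> V) : V -> V :=
  op_scale (2%:R * 'i%C)^-1 (op_add A (op_scale (-1) Astar)).

Definition omega_t (phi psi : R -> R) (t : R) (A Astar : V -> V) : R :=
  sup [set cabs (ip (op_add (op_scale (phi t)%:C%C A) (op_scale (psi t)%:C%C Astar) x) x)
      | x in sphere1].

End HilbertDefs.

(* For a unit vector x write <Ax, x> = a + ib, so that a = <(Re A)x, x> and
   b = <(Im A)x, x>.  Then |<(phi A + psi A^* )x, x>|^2 = (phi + psi)^2 a^2 + (phi - psi)^2 b^2
   is at least m^2 (a^2 + b^2), hence omega_t >= m w(A), where w(A) is the numerical radius.
   As a^2 + b^2 <= w(A)^2 and |b| >= c(Im A), the self-adjoint operator Re A has numerical
   radius, hence norm, at most sqrt(w(A)^2 - c(Im A)^2); symmetrically for Im A.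
   From A = Re A + i Im A, A^*A + AA^* = 2((Re A)^2 + (Im A)^2) and
   (A^*A + AA^* )^2 + 4 (Re (A^2))^2 = 8 ((Re A)^4 + (Im A)^4), the norms in (1)-(4) are at most
   ||Re A|| + ||Im A||, 2 (||Re A||^2 + ||Im A||^2) and 8 (||Re A||^4 + ||Im A||^4), and each
   inequality reduces to (x + y)/2 + |x - y|/2 = max x y <= w(A)^n. *)

From Pilot Require Import Defs.
From HB Require Import structures.
From mathcomp Require Import all_boot all_order all_algebra.
From mathcomp Require Import all_classical all_reals all_analysis.
From mathcomp Require Import complex.
From mathcomp Require Import ring lra.
Import Order.TTheory GRing.Theory Num.Theory numFieldNormedType.Exports.
Local Open Scope classical_set_scope.
Local Open Scope ring_scope.
Local Open Scope complex_scope.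

Set Implicit Arguments.
Unset Strict Implicit.
Unset Printing Implicit Defensive.

Record is_inner_product (R : realType) (V : lmodType R[i]) (ip : V -> V -> R[i]) :
    Prop := InnerProduct {
  ip_linear_l : forall (a : R[i]) (x y z : V), ip (a *: x + y) z = a * ip x z + ip y z;
  ip_conj_sym : forall x y : V, ip y x = conjc (ip x y);
  ip_self_pos : forall x : V, complex.Im (ip x x) = 0 /\ 0 <= complex.Re (ip x x);
  ip_self_eq0 : forall x : V, ip x x = 0 -> x = 0 }.

Lemma hilbert_inner_product (R : realType) (V : lmodType R[i]) (ip : V -> V -> R[i]) :
  is_hilbert ip -> is_inner_product ip.
Proof. by case. Qed.

Section ComplexModulus.
Variable R : realType.

Lemma cabs_ge0 (z : R[i]) : 0 <= cabs z.
Proof. exact: sqrtr_ge0. Qed.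

Lemma cabs_sqr (z : R[i]) : cabs z ^+ 2 = complex.Re z ^+ 2 + complex.Im z ^+ 2.
Proof. by rewrite sqr_sqrtr // addr_ge0 ?sqr_ge0. Qed.

Lemma cabs_real (r : R) : cabs r%:C = `|r|.
Proof. by rewrite /cabs /= expr0n addr0 sqrtr_sqr. Qed.

Lemma Re_realM (r : R) (c : R[i]) : complex.Re (r%:C * c) = r * complex.Re c.
Proof. by case: c => a b; rewrite -complexr0; simpc. Qed.

Lemma normRe_le_cabs (z : R[i]) : `|complex.Re z| <= cabs z.
Proof. by rewrite -sqrtr_sqr ler_wsqrtr // lerDl sqr_ge0. Qed.

Lemma normIm_le_cabs (z : R[i]) : `|complex.Im z| <= cabs z.
Proof. by rewrite -sqrtr_sqr ler_wsqrtr // lerDr sqr_ge0. Qed.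

End ComplexModulus.

Ltac complex_field :=
  apply/eqP; rewrite eq_complex /=; apply/andP; split; apply/eqP; field.

Section InnerProductSpace.
Variables (R : realType) (V : lmodType R[i]) (ip : V -> V -> R[i]).
Hypothesis ipV : is_inner_product ip.
Local Notation C := R[i].
Local Notation Re := complex.Re.
Local Notation Im := complex.Im.
Local Notation vnorm := (vnorm ip).
Local Notation sphere1 := (sphere1 ip).

Lemma ipDl x y z : ip (x + y) z = ip x z + ip y z.
Proof. by have := ip_linear_l ipV 1 x y z; rewrite scale1r mul1r. Qed.

Lemma ip0l z : ip 0 z = 0.
Proof. by have := ipDl 0 0 z; rewrite addr0 -{1}[ip 0 z]addr0 => /addrI <-. Qed.

Lemma ipZl a x z : ip (a *: x) z = a * ip x z.
Proof. by have := ip_linear_l ipV a x 0 z; rewrite addr0 ip0l addr0. Qed.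

Lemma ipDr x y z : ip z (x + y) = ip z x + ip z y.
Proof. by rewrite (ip_conj_sym ipV) ipDl rmorphD /= -!(ip_conj_sym ipV). Qed.

Lemma ipZr a x z : ip z (a *: x) = conjc a * ip z x.
Proof. by rewrite (ip_conj_sym ipV) ipZl rmorphM /= -!(ip_conj_sym ipV). Qed.

Lemma ip0r z : ip z 0 = 0.
Proof. by rewrite (ip_conj_sym ipV) ip0l conjc0. Qed.

Lemma eq_ip_r u v : (forall z, ip z u = ip z v) -> u = v.
Proof.
move=> huv; apply/eqP; rewrite -subr_eq0; apply/eqP/(ip_self_eq0 ipV).
by rewrite -scaleN1r ipDr ipZr huv -ipZr -ipDr scaleN1r subrr ip0r.
Qed.

Definition normsq x := Re (ip x x).

Lemma ip_selfE x : ip x x = (normsq x)%:C.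
Proof. by rewrite /normsq; case: (ip_self_pos ipV x); case: (ip x x) => a b /= ->. Qed.

Lemma normsq_ge0 x : 0 <= normsq x.
Proof. exact: (ip_self_pos ipV x).2. Qed.

Lemma normsq_eq0 x : normsq x = 0 -> x = 0.
Proof. by move=> h; apply: (ip_self_eq0 ipV); rewrite ip_selfE h. Qed.

Lemma normsq0 : normsq 0 = 0.
Proof. by rewrite /normsq ip0l. Qed.

Lemma vnorm_sqr x : vnorm x ^+ 2 = normsq x.
Proof. by rewrite sqr_sqrtr // normsq_ge0. Qed.

Lemma vnorm_ge0 x : 0 <= vnorm x.
Proof. exact: sqrtr_ge0. Qed.

Lemma sphere1E x : sphere1 x <-> normsq x = 1.
Proof.
split => [hx|hx]; first by rewrite -vnorm_sqr hx expr1n.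
by rewrite /Defs.sphere1 /= /Defs.vnorm -/(normsq x) hx sqrtr1.
Qed.

Lemma normsqZ a x : normsq (a *: x) = (Re a ^+ 2 + Im a ^+ 2) * normsq x.
Proof.
rewrite /normsq ipZl ipZr ip_selfE.
by case: a => a1 a2; rewrite -!complexr0; simpc => /=; ring.
Qed.

Lemma normsq_realZ (r : R) x : normsq (r%:C *: x) = r ^+ 2 * normsq x.
Proof. by rewrite normsqZ /= expr0n addr0. Qed.

Lemma vnorm_realZ (r : R) x : vnorm (r%:C *: x) = `|r| * vnorm x.
Proof.
by rewrite /Defs.vnorm -!/(normsq _) normsq_realZ sqrtrM ?sqr_ge0 // sqrtr_sqr.
Qed.

Lemma normsqD u v : normsq (u + v) = normsq u + normsq v + 2 * Re (ip u v).
Proof.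
rewrite /normsq ipDl !ipDr [ip v u](ip_conj_sym ipV) !ip_selfE.
by case: (ip u v) => c1 c2; rewrite -!complexr0; simpc => /=; ring.
Qed.

Lemma nonzero_scaled_unit x : x != 0 ->
  exists s u, [/\ 0 < s, sphere1 u & x = s%:C *: u].
Proof.
move=> nz; have q_gt0 : 0 < normsq x.
  by rewrite lt0r normsq_ge0 andbT; apply: contra nz => /eqP/normsq_eq0 ->.
have s_gt0 : 0 < vnorm x by rewrite sqrtr_gt0.
exists (vnorm x), ((vnorm x)^-1%:C *: x); split => //.
  by apply/sphere1E; rewrite normsq_realZ exprVn vnorm_sqr mulVf ?gt_eqF.
by rewrite scalerA -rmorphM mulfV ?gt_eqF // scale1r.
Qed.

Lemma cauchy_schwarz x y : Re (ip y x) ^+ 2 + Im (ip y x) ^+ 2 <= normsq y * normsq x.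
Proof.
have [->|/nonzero_scaled_unit [s [u [s_gt0 /sphere1E u1 ->]]]] := eqVneq x 0.
  by rewrite ip0r /= expr0n addr0 mulr_ge0 ?normsq_ge0.
(* [0 <= |y - <y,u> u|^2 = |y|^2 - |<y,u>|^2] for a unit vector [u] *)
have := normsq_ge0 (y - ip y u *: u).
rewrite normsq_realZ u1 mulr1 /normsq ipDl !ipDr ipZr -scaleNr !ipZl !ipZr.
rewrite [ip u y](ip_conj_sym ipV) !ip_selfE u1 conjc_real.
case: (ip y u) => c1 c2; rewrite -!complexr0; simpc => /= h.
by rewrite -/(normsq y); nra.
Qed.

Lemma cabs_ip_le x y : cabs (ip y x) <= vnorm y * vnorm x.
Proof.
by rewrite -sqrtrM ?normsq_ge0 //; apply: ler_wsqrtr; apply: cauchy_schwarz.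
Qed.

Lemma vnormD u v : vnorm (u + v) <= vnorm u + vnorm v.
Proof.
rewrite -(ger0_norm (addr_ge0 (vnorm_ge0 u) (vnorm_ge0 v))) -sqrtr_sqr.
apply: ler_wsqrtr; rewrite -/(normsq (u + v)) sqrrD !vnorm_sqr normsqD.
have := le_trans (ler_norm _) (le_trans (normRe_le_cabs _) (cabs_ip_le v u)); lra.
Qed.

Lemma ipBl x y z : ip (x - y) z = ip x z - ip y z.
Proof. by rewrite ipDl -scaleN1r ipZl mulN1r. Qed.

Lemma ipBr x y z : ip z (x - y) = ip z x - ip z y.
Proof. by rewrite ipDr -scaleN1r ipZr rmorphN1 mulN1r. Qed.

Lemma normsq_parallelogram x y :
  normsq (x + y) + normsq (x - y) = 2 * normsq x + 2 * normsq y.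
Proof.
rewrite /normsq ipDl ipBl !ipBr !ipDr.
by case: (ip x x) (ip x y) (ip y x) (ip y y) => [? ?] [? ?] [? ?] [? ?] /=; ring.
Qed.

Lemma vnorm0 : vnorm 0 = 0.
Proof. by rewrite /Defs.vnorm -/(normsq 0) normsq0 sqrtr0. Qed.

Section SphereExtrema.
Variable F : V -> R.
Local Notation image := [set F x | x in sphere1].

Lemma sup_sphere_le K : 0 <= K -> (forall x, sphere1 x -> F x <= K) -> sup image <= K.
Proof.
move=> K_ge0 FK; have [->|/set0P ne] := eqVneq image set0; first by rewrite sup0.
by apply: ge_sup => // _ [y y1 <-]; apply: FK.
Qed.

Lemma le_sup_sphere x : has_ubound image -> sphere1 x -> F x <= sup image.
Proof. by move=> ub x1; apply: ub_le_sup => //; exists x. Qed.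

Hypothesis F_ge0 : forall x, 0 <= F x.

Lemma sup_sphere_ge0 : has_ubound image -> 0 <= sup image.
Proof.
move=> ub; have [->|/set0P [_ [x x1 _]]] := eqVneq image set0; first by rewrite sup0.
exact: le_trans (F_ge0 x) (le_sup_sphere ub x1).
Qed.

Lemma inf_sphere_ge0 : 0 <= inf image.
Proof.
have [->|/set0P ne] := eqVneq image set0; first by rewrite inf0.
by apply: lb_le_inf => // _ [y _ <-].
Qed.

Lemma inf_sphere_le x : sphere1 x -> inf image <= F x.
Proof. by move=> x1; apply: ge_inf; [exists 0 => _ [y _ <-] | exists x]. Qed.

Lemma inf_sphere_le_bound K : 0 <= K -> (forall x, sphere1 x -> F x <= K) -> inf image <= K.
Proof.
move=> K_ge0 FK; have [->|/set0P [_ [x x1 _]]] := eqVneq image set0; first by rewrite inf0.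
exact: le_trans (inf_sphere_le x1) (FK x x1).
Qed.

End SphereExtrema.

Lemma crawford_ge0 T : 0 <= crawford ip T.
Proof. exact: inf_sphere_ge0 (fun x => cabs_ge0 _). Qed.

Lemma crawford_le T x : sphere1 x -> crawford ip T <= cabs (ip (T x) x).
Proof. exact: inf_sphere_le (fun x => cabs_ge0 _) x. Qed.

Lemma crawford_le_bound T K : 0 <= K ->
  (forall x, sphere1 x -> cabs (ip (T x) x) <= K) -> crawford ip T <= K.
Proof.
by move=> K_ge0 TK; apply: (@inf_sphere_le_bound (fun x => cabs (ip (T x) x))) => // x;
  apply: cabs_ge0.
Qed.

Definition linear_op (T : V -> V) : Prop :=
  forall a x y, T (a *: x + y) = a *: T x + T y.

Definition selfadjoint (T : V -> V) : Prop := forall x y, ip (T x) y = ip x (T y).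

Section LinearOperator.
Variable T : V -> V.
Hypothesis T_lin : linear_op T.

Lemma linear_op0 : T 0 = 0.
Proof.
by have := T_lin 1 0 0; rewrite !scale1r addr0 -{1}[T 0]addr0 => /addrI <-.
Qed.

Lemma linear_opD x y : T (x + y) = T x + T y.
Proof. by have := T_lin 1 x y; rewrite !scale1r. Qed.

Lemma linear_opZ a x : T (a *: x) = a *: T x.
Proof. by rewrite -[a *: x]addr0 T_lin linear_op0 addr0. Qed.

Lemma linear_opB x y : T (x - y) = T x - T y.
Proof. by rewrite linear_opD -scaleN1r linear_opZ scaleN1r. Qed.

End LinearOperator.

Lemma linear_op_add S T : linear_op S -> linear_op T -> linear_op (op_add S T).
Proof. by move=> hS hT a x y; rewrite /op_add hS hT scalerDr addrACA. Qed.

Lemma linear_op_comp S T : linear_op S -> linear_op T -> linear_op (op_comp S T).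
Proof. by move=> hS hT a x y; rewrite /op_comp hT hS. Qed.

Lemma linear_op_scale c T : linear_op T -> linear_op (op_scale c T).
Proof. by move=> hT a x y; rewrite /op_scale hT scalerDr !scalerA mulrC. Qed.

Lemma adjoint_sym T Ts : is_adjoint ip T Ts -> forall x y, ip (Ts x) y = ip x (T y).
Proof. by move=> hT x y; rewrite (ip_conj_sym ipV) -hT -(ip_conj_sym ipV). Qed.

Lemma adjoint_linear T Ts : is_adjoint ip T Ts -> linear_op Ts.
Proof. by move=> hT a x y; apply: eq_ip_r => z; rewrite -hT !ipDr !ipZr -!hT. Qed.

Lemma adjoint_comp S Ss T Ts : is_adjoint ip S Ss -> is_adjoint ip T Ts ->
  is_adjoint ip (op_comp S T) (op_comp Ts Ss).
Proof. by move=> hS hT x y; rewrite /op_comp hS hT. Qed.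

Lemma selfadjoint_add S T : selfadjoint S -> selfadjoint T -> selfadjoint (op_add S T).
Proof. by move=> hS hT x y; rewrite /op_add ipDl ipDr hS hT. Qed.

Lemma selfadjoint_realZ (r : R) T : selfadjoint T -> selfadjoint (op_scale r%:C T).
Proof. by move=> hT x y; rewrite /op_scale ipZl ipZr conjc_real hT. Qed.

Lemma selfadjoint_comp T : selfadjoint T -> selfadjoint (op_comp T T).
Proof. by move=> hT x y; rewrite /op_comp !hT. Qed.

Lemma selfadjoint_adjoint_l T Ts : is_adjoint ip T Ts -> selfadjoint (op_comp Ts T).
Proof. by move=> hT x y; rewrite /op_comp (adjoint_sym hT) hT. Qed.

Lemma selfadjoint_adjoint_r T Ts : is_adjoint ip T Ts -> selfadjoint (op_comp T Ts).
Proof. by move=> hT x y; rewrite /op_comp hT (adjoint_sym hT). Qed.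

Section OperatorNorm.
Variables (T : V -> V) (K : R).
Hypothesis T_lin : linear_op T.
Hypothesis T_bound : forall x, sphere1 x -> vnorm (T x) <= K.

Lemma vnorm_le_opnorm y : vnorm (T y) <= opnorm ip T * vnorm y.
Proof.
have [->|/nonzero_scaled_unit [s [u [s_gt0 u1 ->]]]] := eqVneq y 0.
  by rewrite linear_op0 // vnorm0 mulr0.
rewrite linear_opZ // !vnorm_realZ u1 mulr1 gtr0_norm // mulrC ler_pM2r //.
by apply: le_sup_sphere u1; exists K => _ [x x1 <-]; apply: T_bound.
Qed.

Lemma opnorm_ge0 : 0 <= opnorm ip T.
Proof.
apply: sup_sphere_ge0 => [x|]; first exact: vnorm_ge0.
by exists K => _ [x x1 <-]; apply: T_bound.
Qed.

Lemma normsq_le_opnorm y : normsq (T y) <= opnorm ip T ^+ 2 * normsq y.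
Proof.
rewrite -!vnorm_sqr -exprMn ler_sqr ?nnegrE ?vnorm_ge0 ?vnorm_le_opnorm //.
exact: le_trans (vnorm_ge0 _) (vnorm_le_opnorm y).
Qed.

End OperatorNorm.

Section SelfadjointNorm.
Variables (T : V -> V) (K : R).
Hypotheses (T_lin : linear_op T) (T_sa : selfadjoint T).
Hypothesis T_numrange : forall z, sphere1 z -> `|Re (ip (T z) z)| <= K.

Lemma selfadjoint_numrange_le z : `|Re (ip (T z) z)| <= K * normsq z.
Proof.
have [->|/nonzero_scaled_unit [s [u [s_gt0 u1 ->]]]] := eqVneq z 0.
  by rewrite linear_op0 // ip0l normr0 normsq0 mulr0.
rewrite linear_opZ // ipZl ipZr conjc_real mulrA -rmorphM Re_realM normrM.
rewrite normsq_realZ (sphere1E u).1 // mulr1 -expr2 ger0_norm ?sqr_ge0 // mulrC.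
by rewrite ler_pM2r ?exprn_gt0 // T_numrange.
Qed.

Lemma selfadjoint_polarization x y :
  Re (ip (T (x + y)) (x + y)) - Re (ip (T (x - y)) (x - y)) = 4 * Re (ip (T x) y).
Proof.
rewrite linear_opD // linear_opB // !ipBl !ipDl !ipBr !ipDr.
rewrite [ip (T y) x]T_sa [ip y (T x)](ip_conj_sym ipV).
by case: (ip (T x) x) (ip (T x) y) (ip (T y) y) => [? ?] [? ?] [? ?] /=; ring.
Qed.

(* For self-adjoint operators the norm is the numerical radius: test the
   numerical range at [x + y] and [x - y], with [y] the direction of [T x]. *)
Lemma selfadjoint_vnorm_le x : sphere1 x -> vnorm (T x) <= K.
Proof.
move=> x1; have K_ge0 : 0 <= K := le_trans (normr_ge0 _) (T_numrange x1).
have [->|/nonzero_scaled_unit [s [y [s_gt0 y1 Txy]]]] := eqVneq (T x) 0.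
  by rewrite vnorm0.
have -> : vnorm (T x) = s by rewrite Txy vnorm_realZ y1 mulr1 gtr0_norm.
have Re_Txy : Re (ip (T x) y) = s.
  by rewrite Txy ipZl ip_selfE (sphere1E y).1 // -rmorphM mulr1.
have sum_le : `|Re (ip (T (x + y)) (x + y))| + `|Re (ip (T (x - y)) (x - y))| <= K * 4.
  rewrite (_ : 4 = 2 * normsq x + 2 * normsq y); last first.
    by rewrite (sphere1E x).1 // (sphere1E y).1 //; lra.
  by rewrite -normsq_parallelogram mulrDr; apply: lerD; apply: selfadjoint_numrange_le.
have := selfadjoint_polarization x y; rewrite Re_Txy.
have := ler_norm (Re (ip (T (x + y)) (x + y))).
have := ler_norm (- Re (ip (T (x - y)) (x - y))); rewrite normrN.
lra.
Qed.

Lemma selfadjoint_opnorm_le : 0 <= K -> opnorm ip T <= K.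
Proof. by move=> K_ge0; apply: sup_sphere_le => // x; apply: selfadjoint_vnorm_le. Qed.

End SelfadjointNorm.

Lemma selfadjoint_opnorm_sqr_le T (c k : R) : linear_op T -> selfadjoint T ->
  0 <= c -> c <= k -> (forall z, sphere1 z -> Re (ip (T z) z) ^+ 2 + c ^+ 2 <= k ^+ 2) ->
  opnorm ip T ^+ 2 + c ^+ 2 <= k ^+ 2.
Proof.
move=> T_lin T_sa c_ge0 ck numrange_le.
have gap_ge0 : 0 <= k ^+ 2 - c ^+ 2.
  by rewrite subr_ge0 ler_sqr ?nnegrE // (le_trans c_ge0).
have T_numrange z : sphere1 z -> `|Re (ip (T z) z)| <= Num.sqrt (k ^+ 2 - c ^+ 2).
  by move=> z1; rewrite -sqrtr_sqr ler_wsqrtr // lerBrDr numrange_le.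
have := selfadjoint_opnorm_le T_lin T_sa T_numrange (sqrtr_ge0 _).
have T_ge0 := opnorm_ge0 (selfadjoint_vnorm_le T_lin T_sa T_numrange).
by rewrite -ler_sqr ?nnegrE ?sqrtr_ge0 // sqr_sqrtr // => h; lra.
Qed.

Lemma inv2_complex : (2%:R : C)^-1 = (2^-1 : R)%:C.
Proof. by rewrite fmorphV rmorph_nat. Qed.

Lemma inv2i_complex : (2%:R * 'i : C)^-1 = 0 +i* (- 2^-1 : R).
Proof.
have two_i_inv : (2%:R * 'i : C) * (0 +i* (- 2^-1 : R)) = 1.
  have -> : (2%:R : C) = (2%:R : R) +i* 0 by rewrite complexr0 rmorph_nat.
  by simpc; complex_field.
have two_i_neq0 : (2%:R * 'i : C) != 0.
  by apply: contra_eq_neq two_i_inv => ->; rewrite mul0r eq_sym oner_neq0.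
by apply: (mulfI two_i_neq0); rewrite mulfV.
Qed.

Section RealImaginaryParts.
Variables T Ts : V -> V.
Hypothesis T_adj : is_adjoint ip T Ts.

Lemma linear_op_Re : linear_op T -> linear_op (op_Re T Ts).
Proof. by move=> T_lin; apply/linear_op_scale/linear_op_add => //; apply: adjoint_linear. Qed.

Lemma linear_op_Im : linear_op T -> linear_op (op_Im T Ts).
Proof.
move=> T_lin; apply/linear_op_scale/linear_op_add => //.
exact/linear_op_scale/(adjoint_linear T_adj).
Qed.

Lemma selfadjoint_Re : selfadjoint (op_Re T Ts).
Proof.
move=> x y; rewrite /op_Re /op_scale /op_add ipZl ipZr inv2_complex conjc_real.
by rewrite ipDl ipDr T_adj (adjoint_sym T_adj) addrC.
Qed.

Lemma selfadjoint_Im : selfadjoint (op_Im T Ts).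
Proof.
move=> x y; rewrite /op_Im /op_scale /op_add ipZl ipZr ipDl ipDr !ipZl !ipZr.
rewrite T_adj (adjoint_sym T_adj) inv2i_complex.
by case: (ip x (Ts y)) (ip x (T y)) => [? ?] [? ?]; simpc; complex_field.
Qed.

Lemma Re_ip z : ip (op_Re T Ts z) z = (Re (ip (T z) z))%:C.
Proof.
rewrite /op_Re /op_scale /op_add ipZl ipDl (adjoint_sym T_adj) [ip z _](ip_conj_sym ipV).
by rewrite inv2_complex; case: (ip (T z) z) => a b; rewrite -complexr0; simpc; complex_field.
Qed.

Lemma Im_ip z : ip (op_Im T Ts z) z = (Im (ip (T z) z))%:C.
Proof.
rewrite /op_Im /op_scale /op_add ipZl ipDl ipZl (adjoint_sym T_adj).
rewrite [ip z _](ip_conj_sym ipV) inv2i_complex.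
by case: (ip (T z) z) => a b; rewrite -complexr0; simpc; complex_field.
Qed.

Lemma cartesian_decomposition z : T z = op_Re T Ts z + 'i *: op_Im T Ts z.
Proof.
apply: eq_ip_r => w; rewrite /op_Re /op_Im /op_scale /op_add !(ipDr, ipZr).
rewrite inv2_complex inv2i_complex.
by case: (ip w (T z)) (ip w (Ts z)) => [? ?] [? ?]; simpc; complex_field.
Qed.

Lemma vnorm_le_Re_Im z : vnorm (T z) <= vnorm (op_Re T Ts z) + vnorm (op_Im T Ts z).
Proof.
rewrite (cartesian_decomposition z); apply: le_trans (vnormD _ _) _.
have i_normsq : Re 'i ^+ 2 + Im 'i ^+ 2 = 1 :> R by rewrite /= expr0n expr1n add0r.
by rewrite /Defs.vnorm -!/(normsq _) [normsq ('i *: _)]normsqZ i_normsq mul1r.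
Qed.

Lemma normsq_Re_Im z :
  normsq (T z) + normsq (Ts z) = 2 * (normsq (op_Re T Ts z) + normsq (op_Im T Ts z)).
Proof.
rewrite /op_Re /op_Im /op_scale /op_add !normsqZ !normsqD normsqZ ipZr.
rewrite inv2_complex inv2i_complex.
by case: (ip (T z) (Ts z)) => a1 a2; simpc => /=; field.
Qed.

End RealImaginaryParts.

Section AdjointProducts.
Variables A As : V -> V.
Hypotheses (A_lin : linear_op A) (A_adj : is_adjoint ip A As).
Local Notation ReA := (op_Re A As).
Local Notation ImA := (op_Im A As).
Local Notation SA := (op_add (op_comp As A) (op_comp A As)).
Local Notation ReA2 := (op_Re (op_comp A A) (op_comp As As)).
Local Notation QA := (op_add (op_comp SA SA) (op_scale 4%:R (op_comp ReA2 ReA2))).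

Let As_lin : linear_op As := adjoint_linear A_adj.

Lemma linear_op_SA : linear_op SA.
Proof. by apply: linear_op_add; apply: linear_op_comp. Qed.

Lemma selfadjoint_SA : selfadjoint SA.
Proof. exact: selfadjoint_add (selfadjoint_adjoint_l A_adj) (selfadjoint_adjoint_r A_adj). Qed.

Lemma SA_ip z : Re (ip (SA z) z) = normsq (A z) + normsq (As z).
Proof.
rewrite /op_add /op_comp ipDl (adjoint_sym A_adj) [ip (A (As z)) z]A_adj.
by rewrite /normsq; case: (ip (A z) (A z)) (ip (As z) (As z)) => [? ?] [? ?].
Qed.

Lemma ReA_sqr z : ReA (ReA z) = (4^-1 : R)%:C *: (SA z + (2%:R : R)%:C *: ReA2 z).
Proof.
rewrite /op_Re /op_scale /op_add /op_comp.
rewrite !(linear_opZ A_lin, linear_opD A_lin, linear_opZ As_lin, linear_opD As_lin).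
apply: eq_ip_r => w; rewrite !(ipDr, ipZr) inv2_complex.
move: (ip w (A (A z))) (ip w (A (As z))) (ip w (As (A z))) (ip w (As (As z))).
by move=> [? ?] [? ?] [? ?] [? ?]; rewrite -!complexr0; simpc; complex_field.
Qed.

Lemma ImA_sqr z : ImA (ImA z) = (4^-1 : R)%:C *: (SA z + (- 2%:R : R)%:C *: ReA2 z).
Proof.
rewrite /op_Re /op_Im /op_scale /op_add /op_comp.
rewrite !(linear_opZ A_lin, linear_opD A_lin, linear_opZ As_lin, linear_opD As_lin).
apply: eq_ip_r => w; rewrite !(ipDr, ipZr) inv2_complex inv2i_complex.
move: (ip w (A (A z))) (ip w (A (As z))) (ip w (As (A z))) (ip w (As (As z))).
by move=> [? ?] [? ?] [? ?] [? ?]; rewrite -!complexr0; simpc; complex_field.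
Qed.

Lemma linear_op_QA : linear_op QA.
Proof.
apply: linear_op_add; first exact/linear_op_comp/linear_op_SA/linear_op_SA.
by apply/linear_op_scale/linear_op_comp; apply: (linear_op_Re (adjoint_comp A_adj A_adj));
  apply: linear_op_comp.
Qed.

Lemma selfadjoint_QA : selfadjoint QA.
Proof.
apply: selfadjoint_add; first exact/selfadjoint_comp/selfadjoint_SA.
have -> : (4%:R : C) = (4%:R : R)%:C by rewrite rmorph_nat.
apply/selfadjoint_realZ/selfadjoint_comp.
exact/selfadjoint_Re/adjoint_comp.
Qed.

Lemma QA_ip z : Re (ip (QA z) z) = normsq (SA z) + 4 * normsq (ReA2 z).
Proof.
have -> : QA z = SA (SA z) + 4%:R *: ReA2 (ReA2 z) by [].
rewrite ipDl ipZl selfadjoint_SA (selfadjoint_Re (adjoint_comp A_adj A_adj)) /normsq.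
by move: (ip (SA z) (SA z)) (ip (ReA2 z) (ReA2 z)) => [? ?] [? ?] /=; ring.
Qed.

Lemma normsq_SA_ReA2 z :
  normsq (SA z) + 4 * normsq (ReA2 z) = 8 * (normsq (ReA (ReA z)) + normsq (ImA (ImA z))).
Proof.
rewrite ReA_sqr ImA_sqr !normsq_realZ !normsqD !normsq_realZ !ipZr !conjc_real !Re_realM.
by field.
Qed.

Lemma cabs_ip_combination (f g : R) x :
  cabs (ip (op_add (op_scale f%:C A) (op_scale g%:C As) x) x) ^+ 2 =
  (f + g) ^+ 2 * Re (ip (A x) x) ^+ 2 + (f - g) ^+ 2 * Im (ip (A x) x) ^+ 2.
Proof.
rewrite cabs_sqr /op_add /op_scale ipDl !ipZl (adjoint_sym A_adj).
rewrite [ip x (A x)](ip_conj_sym ipV).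
by case: (ip (A x) x) => a b; rewrite -!complexr0; simpc => /=; ring.
Qed.

Section NumericalRangeBound.
Variable k : R.
Hypothesis k_ge0 : 0 <= k.
Hypothesis A_numrange : forall x, sphere1 x -> cabs (ip (A x) x) <= k.

Let ReA_lin : linear_op ReA := linear_op_Re A_adj A_lin.
Let ImA_lin : linear_op ImA := linear_op_Im A_adj A_lin.

Lemma numrange_sqr_le x : sphere1 x -> Re (ip (A x) x) ^+ 2 + Im (ip (A x) x) ^+ 2 <= k ^+ 2.
Proof. by move=> x1; rewrite -cabs_sqr ler_sqr ?nnegrE ?cabs_ge0 ?A_numrange. Qed.

Lemma crawford_Re_le : crawford ip ReA <= k.
Proof.
apply: crawford_le_bound => // x x1; rewrite (Re_ip A_adj) cabs_real.
exact: le_trans (normRe_le_cabs _) (A_numrange x1).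
Qed.

Lemma crawford_Im_le : crawford ip ImA <= k.
Proof.
apply: crawford_le_bound => // x x1; rewrite (Im_ip A_adj) cabs_real.
exact: le_trans (normIm_le_cabs _) (A_numrange x1).
Qed.

Lemma crawford_Re_sqr_le x : sphere1 x -> crawford ip ReA ^+ 2 <= Re (ip (A x) x) ^+ 2.
Proof.
move=> x1; rewrite -[Re _ ^+ 2](real_normK (num_real _)) ler_sqr ?nnegrE ?crawford_ge0 //.
by have := crawford_le ReA x1; rewrite (Re_ip A_adj) cabs_real.
Qed.

Lemma crawford_Im_sqr_le x : sphere1 x -> crawford ip ImA ^+ 2 <= Im (ip (A x) x) ^+ 2.
Proof.
move=> x1; rewrite -[Im _ ^+ 2](real_normK (num_real _)) ler_sqr ?nnegrE ?crawford_ge0 //.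
by have := crawford_le ImA x1; rewrite (Im_ip A_adj) cabs_real.
Qed.

Lemma opnorm_Re_sqr_le : opnorm ip ReA ^+ 2 + crawford ip ImA ^+ 2 <= k ^+ 2.
Proof.
apply: selfadjoint_opnorm_sqr_le (selfadjoint_Re A_adj) (crawford_ge0 _) crawford_Im_le _ => //.
move=> z z1; rewrite (Re_ip A_adj) /=.
by have := numrange_sqr_le z1; have := crawford_Im_sqr_le z1; lra.
Qed.

Lemma opnorm_Im_sqr_le : opnorm ip ImA ^+ 2 + crawford ip ReA ^+ 2 <= k ^+ 2.
Proof.
apply: selfadjoint_opnorm_sqr_le (selfadjoint_Im A_adj) (crawford_ge0 _) crawford_Re_le _ => //.
move=> z z1; rewrite (Im_ip A_adj) /=.
by have := numrange_sqr_le z1; have := crawford_Re_sqr_le z1; lra.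
Qed.

Let ReA_bound x : sphere1 x -> vnorm (ReA x) <= k.
Proof.
move=> x1; apply: (selfadjoint_vnorm_le ReA_lin (selfadjoint_Re A_adj) _ x1) => z z1.
rewrite (Re_ip A_adj) /=; exact: le_trans (normRe_le_cabs _) (A_numrange z1).
Qed.

Let ImA_bound x : sphere1 x -> vnorm (ImA x) <= k.
Proof.
move=> x1; apply: (selfadjoint_vnorm_le ImA_lin (selfadjoint_Im A_adj) _ x1) => z z1.
rewrite (Im_ip A_adj) /=; exact: le_trans (normIm_le_cabs _) (A_numrange z1).
Qed.

Lemma opnorm_le_Re_Im : opnorm ip A <= opnorm ip ReA + opnorm ip ImA.
Proof.
have nRe_ge0 := opnorm_ge0 ReA_bound; have nIm_ge0 := opnorm_ge0 ImA_bound.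
apply: sup_sphere_le (addr_ge0 nRe_ge0 nIm_ge0) _ => x x1.
apply: le_trans (vnorm_le_Re_Im A As x) _.
have x1' : vnorm x = 1 := x1.
apply: lerD; first by have := vnorm_le_opnorm ReA_lin ReA_bound x; rewrite x1' mulr1.
by have := vnorm_le_opnorm ImA_lin ImA_bound x; rewrite x1' mulr1.
Qed.

Lemma opnorm_SA_le : opnorm ip SA <= 2 * (opnorm ip ReA ^+ 2 + opnorm ip ImA ^+ 2).
Proof.
apply: selfadjoint_opnorm_le linear_op_SA selfadjoint_SA _ _.
  move=> z /sphere1E z1; rewrite SA_ip ger0_norm ?addr_ge0 ?normsq_ge0 //.
  rewrite normsq_Re_Im ler_pM2l // lerD //.
    by have := normsq_le_opnorm ReA_lin ReA_bound z; rewrite z1 mulr1.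
  by have := normsq_le_opnorm ImA_lin ImA_bound z; rewrite z1 mulr1.
by rewrite mulr_ge0 ?addr_ge0 ?sqr_ge0.
Qed.

Lemma opnorm_QA_le : opnorm ip QA <= 8 * (opnorm ip ReA ^+ 4 + opnorm ip ImA ^+ 4).
Proof.
have normsq_sqr_le T : linear_op T -> (forall x, sphere1 x -> vnorm (T x) <= k) ->
    forall z, sphere1 z -> normsq (T (T z)) <= opnorm ip T ^+ 4.
  move=> T_lin T_bound z /sphere1E z1; apply: le_trans (normsq_le_opnorm T_lin T_bound _) _.
  rewrite (_ : 4 = 2 + 2)%N // exprD ler_wpM2l ?sqr_ge0 //.
  by have := normsq_le_opnorm T_lin T_bound z; rewrite z1 mulr1.
apply: selfadjoint_opnorm_le linear_op_QA selfadjoint_QA _ _.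
  move=> z z1; rewrite QA_ip ger0_norm ?addr_ge0 ?mulr_ge0 ?normsq_ge0 //.
  rewrite normsq_SA_ReA2 ler_pM2l // lerD //; exact: normsq_sqr_le.
by rewrite mulr_ge0 ?addr_ge0 ?exprn_ge0 ?(opnorm_ge0 ReA_bound) ?(opnorm_ge0 ImA_bound).
Qed.

End NumericalRangeBound.

End AdjointProducts.

Definition numrad (T : V -> V) : R := sup [set cabs (ip (T x) x) | x in sphere1].

Section NumericalRadius.
Variables A As : V -> V.
Hypothesis A_adj : is_adjoint ip A As.
Hypothesis A_bounded : exists M, forall x, vnorm (A x) <= M * vnorm x.

Let numrange_ub : has_ubound [set cabs (ip (A x) x) | x in sphere1].
Proof.
case: A_bounded => M A_M; exists M => _ [x x1 <-].
have x1' : vnorm x = 1 := x1.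
by apply: le_trans (cabs_ip_le x (A x)) _; have := A_M x; rewrite x1' !mulr1.
Qed.

Lemma numrad_ge0 : 0 <= numrad A.
Proof. exact: sup_sphere_ge0 (fun x => cabs_ge0 _) numrange_ub. Qed.

Lemma cabs_le_numrad x : sphere1 x -> cabs (ip (A x) x) <= numrad A.
Proof. exact: le_sup_sphere numrange_ub. Qed.

Lemma numrad_le_omega (f g : R) :
  Num.min `|f + g| `|f - g| * numrad A <=
  sup [set cabs (ip (op_add (op_scale f%:C A) (op_scale g%:C As) x) x) | x in sphere1].
Proof.
set W := op_add _ _; set m := Num.min _ _.
have m_ge0 : 0 <= m by rewrite le_min !normr_ge0.
have m_sqr_le u : (u == f + g) || (u == f - g) -> m ^+ 2 <= u ^+ 2.
  rewrite -(real_normK (num_real u)) ler_sqr ?nnegrE // /m.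
  by case/orP => /eqP ->; rewrite ge_min lexx ?orbT.
have W_ge x : sphere1 x -> m * cabs (ip (A x) x) <= cabs (ip (W x) x).
  move=> x1; rewrite -ler_sqr ?nnegrE ?mulr_ge0 ?cabs_ge0 //.
  rewrite exprMn /W (cabs_ip_combination A_adj) cabs_sqr mulrDr.
  by apply: lerD; apply: ler_wpM2r; rewrite ?sqr_ge0 ?m_sqr_le ?eqxx ?orbT.
have W_ub : has_ubound [set cabs (ip (W x) x) | x in sphere1].
  exists (Num.sqrt ((f + g) ^+ 2 + (f - g) ^+ 2) * numrad A) => _ [x x1 <-].
  rewrite -ler_sqr ?nnegrE ?mulr_ge0 ?sqrtr_ge0 ?cabs_ge0 ?numrad_ge0 //.
  rewrite exprMn /W (cabs_ip_combination A_adj) sqr_sqrtr ?addr_ge0 ?sqr_ge0 //.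
  have := numrange_sqr_le numrad_ge0 cabs_le_numrad x1.
  have := sqr_ge0 (f + g); have := sqr_ge0 (f - g).
  have := sqr_ge0 (Re (ip (A x) x)); have := sqr_ge0 (Im (ip (A x) x)).
  nra.
have w_ge0 := sup_sphere_ge0 (fun x => cabs_ge0 _) W_ub.
have [->|m_neq0] := eqVneq m 0; first by rewrite mul0r.
have m_gt0 : 0 < m by rewrite lt0r m_neq0.
rewrite mulrC -ler_pdivlMr //; apply: sup_sphere_le; first exact: divr_ge0.
move=> x x1; rewrite ler_pdivlMr // mulrC.
exact: le_trans (W_ge x x1) (le_sup_sphere W_ub x1).
Qed.

End NumericalRadius.

End InnerProductSpace.

Lemma le_half_dist (R : realFieldType) (s x y k : R) :
  2 * s <= x + y -> x <= k -> y <= k -> s + `|x - y| / 2 <= k.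
Proof.
move=> sxy xk yk; have := maxr_absE x y.
have : Num.max x y <= k by rewrite ge_max xk yk.
lra.
Qed.

Lemma le_scaled_half_dist (R : realFieldType) (n : nat) (m k w s x y : R) :
  0 <= m -> 0 <= k -> m * k <= w -> 2 * s <= x + y -> x <= k ^+ n -> y <= k ^+ n ->
  m ^+ n * (s + `|x - y| / 2) <= w ^+ n.
Proof.
move=> m_ge0 k_ge0 mkw sxy xk yk.
apply: le_trans (ler_wpM2l (exprn_ge0 n m_ge0) (le_half_dist sxy xk yk)) _.
have mk_ge0 : 0 <= m * k by rewrite mulr_ge0.
by rewrite -exprMn lerXn2r // nnegrE (le_trans mk_ge0).
Qed.

Lemma numrange_bounds_arith (R : realFieldType) (m k w oA oP oQ b c cb cc : R) :
  0 <= m -> 0 <= k -> m * k <= w ->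
  b ^+ 2 + cc ^+ 2 <= k ^+ 2 -> c ^+ 2 + cb ^+ 2 <= k ^+ 2 ->
  oA <= b + c -> oP <= 2 * (b ^+ 2 + c ^+ 2) -> oQ <= 8 * (b ^+ 4 + c ^+ 4) ->
  [/\ w >= m * (oA / 2 + `|b - c| / 2),
      w ^+ 2 >= m ^+ 2 * (oP / 4 + `|b ^+ 2 - c ^+ 2| / 2),
      w ^+ 2 >= m ^+ 2 * (oP / 4 + (cb ^+ 2 + cc ^+ 2) / 2
                          + `|(b ^+ 2 - c ^+ 2) / 2 + (cc ^+ 2 - cb ^+ 2) / 2|)
    & w ^+ 4 >= m ^+ 4 * (oQ / 16 + `|b ^+ 4 - c ^+ 4| / 2)].
Proof.
move=> m_ge0 k_ge0 mkw bk ck oAle oPle oQle.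
have b_k : b ^+ 2 <= k ^+ 2 by have := sqr_ge0 cc; lra.
have c_k : c ^+ 2 <= k ^+ 2 by have := sqr_ge0 cb; lra.
have le_k x : x ^+ 2 <= k ^+ 2 -> x <= k by move=> xk; nra.
have pow4_le_k x : x ^+ 2 <= k ^+ 2 -> x ^+ 4 <= k ^+ 4.
  by move=> xk; rewrite -[4%N]/(2 * 2)%N !exprM lerXn2r // nnegrE sqr_ge0.
split.
- by apply: (@le_scaled_half_dist _ 1 m k) => //; [lra | apply: le_k | apply: le_k].
- by apply: (@le_scaled_half_dist _ 2 m k) => //; lra.
- have -> : `|(b ^+ 2 - c ^+ 2) / 2 + (cc ^+ 2 - cb ^+ 2) / 2|
            = `|(b ^+ 2 + cc ^+ 2) - (c ^+ 2 + cb ^+ 2)| / 2.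
    by rewrite -mulrDl normrM [`|2^-1|]ger0_norm // -addrACA opprD.
  by apply: (@le_scaled_half_dist _ 2 m k) => //; lra.
- by apply: (@le_scaled_half_dist _ 4 m k) => //; [lra | apply: pow4_le_k | apply: pow4_le_k].
Qed.

Theorem theorem3p2 (R : realType) (V : lmodType R[i]) (ip : V -> V -> R[i])
  (HV : is_hilbert ip)
  (phi psi : R -> R)
  (hphi : {within `[0, 1], continuous phi})
  (hpsi : {within `[0, 1], continuous psi})
  (A Astar : V -> V) (hA : bounded_op ip A) (hAstar : is_adjoint ip A Astar)
  (t : R) (ht : t \in `[(0:R), 1]) :
  let m := Num.min `|phi t + psi t| `|phi t - psi t| in
  let w := omega_t ip phi psi t A Astar in
  let nRe := opnorm ip (op_Re A Astar) in
  let nIm := opnorm ip (op_Im A Astar) in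
  let P := op_add (op_comp Astar A) (op_comp A Astar) in
  let ReA2 := op_Re (op_comp A A) (op_comp Astar Astar) in
  [/\ w >= m * (opnorm ip A / 2 + `|nRe - nIm| / 2),
      w ^+ 2 >= m ^+ 2 * (opnorm ip P / 4 + `|nRe ^+ 2 - nIm ^+ 2| / 2),
      w ^+ 2 >= m ^+ 2 * (opnorm ip P / 4
                 + (crawford ip (op_Re A Astar) ^+ 2 + crawford ip (op_Im A Astar) ^+ 2) / 2
                 + `|(nRe ^+ 2 - nIm ^+ 2) / 2
                     + (crawford ip (op_Im A Astar) ^+ 2 - crawford ip (op_Re A Astar) ^+ 2) / 2|)
    & w ^+ 4 >= m ^+ 4 * (opnorm ip (op_add (op_comp P P) (op_scale 4%:R (op_comp ReA2 ReA2))) / 16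
                 + `|nRe ^+ 4 - nIm ^+ 4| / 2)].
Proof.
move=> m w nRe nIm P ReA2.
have ipV := hilbert_inner_product HV.
case: hA => A_lin A_bounded.
have k_ge0 := numrad_ge0 ipV A_bounded.
have A_numrange := cabs_le_numrad ipV A_bounded.
apply: (numrange_bounds_arith _ k_ge0).
- by rewrite le_min !normr_ge0.
- exact (numrad_le_omega ipV hAstar A_bounded (phi t) (psi t)).
- exact (opnorm_Re_sqr_le ipV A_lin hAstar k_ge0 A_numrange).
- exact (opnorm_Im_sqr_le ipV A_lin hAstar k_ge0 A_numrange).
- exact (opnorm_le_Re_Im ipV A_lin hAstar A_numrange).
- exact (opnorm_SA_le ipV A_lin hAstar A_numrange).
- exact (opnorm_QA_le ipV A_lin hAstar A_numrange).
Qed.
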